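(* Let $L$ be a linear continuum with endpoints, let $(f_i:i\in I)$ be an indiscernible sequence of single elements of $M_L$ of length at least $3$, let $i<j$ be elements of $I$, and let $(a,b)\in\mathrm{im}(f_i,f_j)$. Then either $(a,a)\in\mathrm{im}(f_i,f_j)$ or $(b,b)\in\mathrm{im}(f_i,f_j)$.
   Context: A linear continuum is a dense linear order with the least upper bound property; with endpoints means it has a least and greatest element. $M_L$ is the set of functions $f:L\to[0,1]$ that are nondecreasing, continuous in the order topology, with $\inf f=0$ and $\sup f=1$, with the sup metric, regarded as a metric structure in the language of binary predicates $\varphi_\alpha$ ($\alpha\in\mathbb{Q}\cap[0,1]$), where $\varphi_\alpha(f,g)=f(t)$ for any $t\in L$ with $f(t)+g(t)=\alpha$. $\mathrm{im}(f,g)=\{(f(t),g(t)):t\in L\}$. A sequence is indiscernible if every formula takes the same value on all increasing tuples from it. *)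

From Stdlib Require Import Reals QArith ClassicalEpsilon.
Open Scope R_scope.

Section Orders.
Variables (L : Type) (lt : L -> L -> Prop).

Definition le (x y : L) : Prop := lt x y \/ x = y.

Record StrictLinearOrder : Prop := {
  slo_irrefl : forall x, ~ lt x x;
  slo_trans  : forall x y z, lt x y -> lt y z -> lt x z;
  slo_total  : forall x y, lt x y \/ x = y \/ lt y x
}.

Record LinearContinuumWithEndpoints : Prop := {
  lc_order : StrictLinearOrder;
  lc_dense : forall x y, lt x y -> exists z, lt x z /\ lt z y;
  lc_lub   : forall S : L -> Prop, (exists x, S x) ->
               (exists u, forall x, S x -> le x u) ->
               exists s, (forall x, S x -> le x s) /\
                         (forall u, (forall x, S x -> le x u) -> le s u);
  lc_min   : exists m, forall x, le m x;
  lc_max   : exists M, forall x, le x M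
}.

(* Continuity for the order topology: at every point t, for every eps > 0
   there is a basic open interval (lo, hi) containing t (lo = None means no
   lower bound, hi = None means no upper bound) on which f stays eps-close
   to f t. *)
Definition below_opt (lo : option L) (s : L) : Prop :=
  match lo with None => True | Some a => lt a s end.
Definition above_opt (hi : option L) (s : L) : Prop :=
  match hi with None => True | Some b => lt s b end.

Definition order_continuous (f : L -> R) : Prop :=
  forall t eps, 0 < eps ->
    exists lo hi, below_opt lo t /\ above_opt hi t /\
      forall s, below_opt lo s -> above_opt hi s -> Rabs (f s - f t) < eps.

(* real supremum of a set of reals (0 if empty or unbounded) *)
Definition Rsup (E : R -> Prop) : R :=
  match excluded_middle_informative (bound E /\ exists x, E x) with
  | left h => proj1_sig (completeness E (proj1 h) (proj2 h))
  | right _ => 0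
  end.
Definition Rinf (E : R -> Prop) : R := - Rsup (fun r => E (- r)).

Definition inML (f : L -> R) : Prop :=
  (forall t, 0 <= f t <= 1) /\
  (forall s t, le s t -> f s <= f t) /\
  order_continuous f /\
  Rinf (fun r => exists t, r = f t) = 0 /\
  Rsup (fun r => exists t, r = f t) = 1.

Definition ML : Type := { f : L -> R | inML f }.

Definition dist (f g : ML) : R :=
  Rsup (fun r => exists t, r = Rabs (proj1_sig f t - proj1_sig g t)).

(* phi_alpha(f,g) = f(t) for any t with f(t)+g(t) = alpha (all such t give
   the same value; we take the supremum of these values) *)
Definition phiA (alpha : R) (f g : ML) : R :=
  Rsup (fun r => exists t, proj1_sig f t + proj1_sig g t = alpha /\
                           r = proj1_sig f t).

Definition im (f g : ML) (p : R * R) : Prop :=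
  exists t, proj1_sig f t = fst p /\ proj1_sig g t = snd p.

End Orders.

Arguments ML {L} lt.

(* Connectives: the standard full system 0, 1, ¬x = 1-x, x/2, x ∸ y,
   plus quantifiers sup and inf. Variables are natural numbers. *)
Inductive formula : Type :=
| FDist  (i j : nat)
| FPhi   (a : Q) (Ha : (0 <= a /\ a <= 1)%Q) (i j : nat)
| FZero
| FOne
| FNeg   (p : formula)
| FHalf  (p : formula)
| FMinus (p q : formula)
| FSup   (i : nat) (p : formula)
| FInf   (i : nat) (p : formula).

Fixpoint free_in (k : nat) (p : formula) : Prop :=
  match p with
  | FDist i j => k = i \/ k = j
  | FPhi _ _ i j => k = i \/ k = j
  | FZero | FOne => False
  | FNeg p | FHalf p => free_in k p
  | FMinus p q => free_in k p \/ free_in k q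
  | FSup i p | FInf i p => k <> i /\ free_in k p
  end.

Definition fv_below (n : nat) (p : formula) : Prop :=
  forall k, free_in k p -> (k < n)%nat.

Section Semantics.
Variables (L : Type) (lt : L -> L -> Prop).

Definition upd (e : nat -> ML lt) (i : nat) (g : ML lt) : nat -> ML lt :=
  fun k => if Nat.eqb k i then g else e k.

Fixpoint eval (e : nat -> ML lt) (p : formula) : R :=
  match p with
  | FDist i j => dist L lt (e i) (e j)
  | FPhi a _ i j => phiA L lt (Q2R a) (e i) (e j)
  | FZero => 0
  | FOne => 1
  | FNeg p => 1 - eval e p
  | FHalf p => eval e p / 2
  | FMinus p q => Rmax 0 (eval e p - eval e q)
  | FSup i p => Rsup (fun r => exists g, r = eval (upd e i g) p)
  | FInf i p => Rinf (fun r => exists g, r = eval (upd e i g) p)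
  end.

Definition increasing_on {I : Type} (ltI : I -> I -> Prop) (n : nat)
  (s : nat -> I) : Prop :=
  forall a b, (a < b)%nat -> (b < n)%nat -> ltI (s a) (s b).

Definition indiscernible {I : Type} (ltI : I -> I -> Prop)
  (f : I -> ML lt) : Prop :=
  forall (p : formula) (n : nat), fv_below n p ->
  forall s s' : nat -> I, increasing_on ltI n s -> increasing_on ltI n s' ->
    eval (fun k => f (s k)) p = eval (fun k => f (s' k)) p.

End Semantics.

From Pilot Require Import Defs.
From Stdlib Require Import Reals QArith Qreals Lra Lia ClassicalEpsilon.
Open Scope R_scope.

(* For f, g in M_L, im(f, g) is the graph of the level map beta |-> phi_beta(f, g), the value
   of f where f + g = beta; this map is 1-Lipschitz on [0, 2].  For a dense set of levels it is
   the value of a two-variable formula: phi_beta itself for rational beta <= 1, and for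
   beta = 1 + c a supremum over a third variable h of phi_1(x0, h) penalised by d(h, x1) ∸ c.
   Hence, by indiscernibility, im(f_p, f_q) is one set S for all p < q, and p < q < r gives
   S ⊆ S ∘ S.  Now let (a, b) ∈ S with a < b and let t0 be the first point where f_i = a.  If
   f_j(t0) <= a, then f_j crosses a while f_i stays at a.  Otherwise composing S at
   (a, f_j(t0)) produces a point beyond the given one where f_i = f_j = f_j(t0), which forces
   f_j(t0) = b. *)

Lemma Rsup_is_lub (E : R -> Prop) : bound E -> (exists x, E x) -> is_lub E (Rsup E).
Proof.
  intros Hb Hne. unfold Rsup.
  destruct (excluded_middle_informative _) as [H|H].
  - exact (proj2_sig (completeness E (proj1 H) (proj2 H))).
  - tauto.
Qed.

Lemma Rsup_eq_max (E : R -> Prop) m : E m -> (forall x, E x -> x <= m) -> Rsup E = m.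
Proof.
  intros Hm Hub.
  destruct (Rsup_is_lub E (ex_intro _ m Hub) (ex_intro _ m Hm)) as [Hupper Hleast].
  apply Rle_antisym; [apply Hleast; exact Hub | apply Hupper; exact Hm].
Qed.

Lemma Rsup_upper (E : R -> Prop) x : bound E -> E x -> x <= Rsup E.
Proof. intros Hb Hx. apply (Rsup_is_lub E Hb (ex_intro _ x Hx)); exact Hx. Qed.

Lemma Rsup_least (E : R -> Prop) u : (exists x, E x) -> (forall x, E x -> x <= u) -> Rsup E <= u.
Proof. intros Hne Hu. apply (Rsup_is_lub E (ex_intro _ u Hu) Hne); exact Hu. Qed.

Lemma Rmax0_lipschitz x y : Rabs (Rmax 0 x - Rmax 0 y) <= Rabs (x - y).
Proof. unfold Rmax, Rabs; repeat destruct Rle_dec; repeat destruct Rcase_abs; lra. Qed.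

Lemma Q2R_dense x y : x < y -> exists q : Q, x < Q2R q < y.
Proof.
  intros Hxy.
  set (n := up (/ (y - x))).
  assert (Hn : 1 < (y - x) * IZR n).
  { destruct (archimed (/ (y - x))) as [H _].
    apply (Rmult_lt_compat_l (y - x)) in H; [|lra].
    rewrite Rinv_r in H; [exact H | lra]. }
  assert (HN : 0 < IZR n) by nra.
  set (k := up (x * IZR n)).
  destruct (archimed (x * IZR n)) as [Hk1 Hk2].
  exists (k # Z.to_pos n).
  unfold Q2R; cbn [Qnum Qden]. rewrite Z2Pos.id by (apply lt_0_IZR; exact HN).
  split; apply (Rmult_lt_reg_r (IZR n)); try exact HN;
    rewrite ?Rmult_assoc, ?Rinv_l, ?Rmult_1_r by lra; fold k in Hk1, Hk2; nra.
Qed.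

Lemma Q2R_in_unit (q : Q) : (0 <= q /\ q <= 1)%Q <-> 0 <= Q2R q <= 1.
Proof.
  rewrite <- RMicromega.Q2R_0, <- RMicromega.Q2R_1.
  split; intros [H0 H1]; split; auto using Qle_Rle, Rle_Qle.
Qed.

Lemma Q_unit_approx x eps : 0 <= x <= 1 -> 0 < eps ->
  exists q : Q, 0 < Q2R q < 1 /\ Rabs (Q2R q - x) < eps.
Proof.
  intros Hx Heps.
  destruct (Q2R_dense (Rmax 0 (x - eps)) (Rmin 1 (x + eps))) as [q Hq].
  { apply Rmax_lub_lt; apply Rmin_glb_lt; lra. }
  pose proof (Rmax_l 0 (x - eps)); pose proof (Rmax_r 0 (x - eps)).
  pose proof (Rmin_l 1 (x + eps)); pose proof (Rmin_r 1 (x + eps)).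
  exists q. split; [lra|]. apply Rabs_def1; lra.
Qed.

Lemma lipschitz_eq_of_dense_eq (phi psi : R -> R) a b x :
  (forall y z, a <= y <= b -> a <= z <= b -> Rabs (phi y - phi z) <= Rabs (y - z)) ->
  (forall y z, a <= y <= b -> a <= z <= b -> Rabs (psi y - psi z) <= Rabs (y - z)) ->
  (forall eps, 0 < eps -> exists z, a <= z <= b /\ Rabs (z - x) < eps /\ phi z = psi z) ->
  a <= x <= b -> phi x = psi x.
Proof.
  intros Hphi Hpsi Hdense Hx.
  destruct (Req_dec (phi x) (psi x)) as [|Hne]; [assumption|exfalso].
  assert (Hd : 0 < Rabs (phi x - psi x)) by (apply Rabs_pos_lt; lra).
  destruct (Hdense (Rabs (phi x - psi x) / 2)) as [z [Hz [Hzx Heq]]]; [lra|].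
  pose proof (Hphi x z Hx Hz) as Hxz; pose proof (Hpsi z x Hz Hx) as Hzx'.
  pose proof (Rabs_triang (phi x - phi z) (psi z - psi x)) as Htri.
  rewrite (Rabs_minus_sym x z) in Hxz. rewrite Heq in Hxz, Htri.
  replace (phi x - psi z + (psi z - psi x)) with (phi x - psi x) in Htri by ring.
  lra.
Qed.

Definition nondecreasing {L : Type} (lt : L -> L -> Prop) (F : L -> R) : Prop :=
  forall s t, le L lt s t -> F s <= F t.

Section LinearContinuum.
Context {L : Type} {lt : L -> L -> Prop} (HL : LinearContinuumWithEndpoints L lt).
Local Notation leL := (le L lt).
Local Notation below := (below_opt L lt).
Local Notation above := (above_opt L lt).

Lemma lt_irrefl x : ~ lt x x.
Proof. exact (slo_irrefl _ _ (lc_order _ _ HL) x). Qed.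

Lemma lt_trans x y z : lt x y -> lt y z -> lt x z.
Proof. exact (slo_trans _ _ (lc_order _ _ HL) x y z). Qed.

Lemma le_lt_trans x y z : leL x y -> lt y z -> lt x z.
Proof. intros [Hxy| ->] Hyz; [exact (lt_trans x y z Hxy Hyz) | exact Hyz]. Qed.

Lemma lt_le_trans x y z : lt x y -> leL y z -> lt x z.
Proof. intros Hxy [Hyz| <-]; [exact (lt_trans x y z Hxy Hyz) | exact Hxy]. Qed.

Lemma le_or_gt x y : leL x y \/ lt y x.
Proof. unfold le. destruct (slo_total _ _ (lc_order _ _ HL) x y) as [H|[H|H]]; auto. Qed.

Lemma lt_not_ge x y : lt x y -> ~ leL y x.
Proof. intros Hxy Hyx. exact (lt_irrefl y (le_lt_trans y x y Hyx Hxy)). Qed.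

Lemma below_meet lo1 lo2 t : below lo1 t -> below lo2 t ->
  exists lo, below lo t /\ forall s, below lo s -> below lo1 s /\ below lo2 s.
Proof.
  destruct lo1 as [a|], lo2 as [b|]; cbn; intros H1 H2.
  - destruct (le_or_gt a b) as [Hab|Hba].
    + exists (Some b). split; [exact H2|].
      intros s Hs. split; [exact (le_lt_trans a b s Hab Hs) | exact Hs].
    + exists (Some a). split; [exact H1|].
      intros s Hs. split; [exact Hs | exact (lt_trans b a s Hba Hs)].
  - exists (Some a). auto.
  - exists (Some b). auto.
  - exists None. auto.
Qed.

Lemma above_meet hi1 hi2 t : above hi1 t -> above hi2 t ->
  exists hi, above hi t /\ forall s, above hi s -> above hi1 s /\ above hi2 s.
Proof.
  destruct hi1 as [a|], hi2 as [b|]; cbn; intros H1 H2.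
  - destruct (le_or_gt a b) as [Hab|Hba].
    + exists (Some a). split; [exact H1|].
      intros s Hs. split; [exact Hs | exact (lt_le_trans s a b Hs Hab)].
    + exists (Some b). split; [exact H2|].
      intros s Hs. split; [exact (lt_trans s b a Hs Hba) | exact Hs].
  - exists (Some a). auto.
  - exists (Some b). auto.
  - exists None. auto.
Qed.

Lemma below_trans lo s x : below lo s -> lt s x -> below lo x.
Proof. destruct lo as [a|]; cbn; [apply lt_trans | auto]. Qed.

Lemma above_trans hi s x : above hi s -> lt x s -> above hi x.
Proof. destruct hi as [a|]; cbn; [intros; eapply lt_trans; eauto | auto]. Qed.

Lemma above_exists hi s t : lt s t -> above hi s -> exists x, lt s x /\ above hi x.
Proof.
  destruct hi as [c|]; cbn; intros Hst Hsc.
  - destruct (lc_dense _ _ HL s c Hsc) as [x Hx]. exists x. exact Hx.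
  - exists t. auto.
Qed.

Lemma below_exists lo s t : lt t s -> below lo s -> exists x, lt x s /\ below lo x.
Proof.
  destruct lo as [c|]; cbn; intros Hts Hcs.
  - destruct (lc_dense _ _ HL c s Hcs) as [x [Hcx Hxs]]. exists x. auto.
  - exists t. auto.
Qed.

Lemma continuous_right_approx (F : L -> R) s t eps : order_continuous L lt F ->
  lt s t -> 0 < eps -> exists x, lt s x /\ lt x t /\ Rabs (F x - F s) < eps.
Proof.
  intros Hc Hst Heps.
  destruct (Hc s eps Heps) as [lo [hi [Hlo [Hhi Hnear]]]].
  destruct (above_meet hi (Some t) s Hhi Hst) as [hi' [Hhi' Hsub]].
  destruct (above_exists hi' s t Hst Hhi') as [x [Hsx Hx]].
  destruct (Hsub x Hx) as [Hxhi Hxt].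
  exists x. repeat split; auto. exact (Hnear x (below_trans lo s x Hlo Hsx) Hxhi).
Qed.

Lemma continuous_left_approx (F : L -> R) s t eps : order_continuous L lt F ->
  lt t s -> 0 < eps -> exists x, lt x s /\ lt t x /\ Rabs (F x - F s) < eps.
Proof.
  intros Hc Hts Heps.
  destruct (Hc s eps Heps) as [lo [hi [Hlo [Hhi Hnear]]]].
  destruct (below_meet lo (Some t) s Hlo Hts) as [lo' [Hlo' Hsub]].
  destruct (below_exists lo' s t Hts Hlo') as [x [Hxs Hx]].
  destruct (Hsub x Hx) as [Hxlo Htx].
  exists x. repeat split; auto. exact (Hnear x Hxlo (above_trans hi s x Hhi Hxs)).
Qed.

Lemma nondecreasing_ivt (F : L -> R) t1 t2 v :
  nondecreasing lt F -> order_continuous L lt F -> leL t1 t2 -> F t1 <= v <= F t2 ->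
  exists t, F t = v /\ leL t1 t /\ leL t t2.
Proof.
  intros Hmono Hc H12 [Hv1 Hv2].
  set (S := fun x => leL t1 x /\ leL x t2 /\ F x <= v).
  destruct (lc_lub _ _ HL S) as [s [Hub Hleast]].
  { exists t1. repeat split; auto. right; reflexivity. }
  { exists t2. intros x Hx. apply Hx. }
  assert (Ht1s : leL t1 s) by (apply Hub; repeat split; auto; right; reflexivity).
  assert (Hst2 : leL s t2) by (apply Hleast; intros x Hx; apply Hx).
  destruct (total_order_T (F s) v) as [[Hlt|Heq]|Hgt].
  - exfalso.
    assert (Hs_t2 : lt s t2) by (destruct Hst2 as [| <-]; [assumption|lra]).
    destruct (continuous_right_approx F s t2 (v - F s) Hc Hs_t2) as [x [Hsx [Hxt Hx]]]; [lra|].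
    apply Rabs_def2 in Hx.
    apply (lt_not_ge s x Hsx), Hub.
    split; [left; exact (le_lt_trans t1 s x Ht1s Hsx)|]. split; [left; exact Hxt|lra].
  - exists s. auto.
  - exfalso.
    assert (Ht1_s : lt t1 s) by (destruct Ht1s as [| ->]; [assumption|lra]).
    destruct (continuous_left_approx F s t1 (F s - v) Hc Ht1_s) as [x [Hxs [Htx Hx]]]; [lra|].
    apply Rabs_def2 in Hx.
    apply (lt_not_ge x s Hxs), Hleast. intros y [_ [_ Hy]].
    destruct (le_or_gt y x) as [|Hxy]; [assumption|].
    pose proof (Hmono x y (or_introl Hxy)). lra.
Qed.

Lemma nondecreasing_fiber_min (F : L -> R) a :
  nondecreasing lt F -> order_continuous L lt F -> (exists t, F t = a) ->
  exists t0, F t0 = a /\ forall t, F t = a -> leL t0 t.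
Proof.
  intros Hmono Hc [ta Hta].
  set (B := fun x => forall t, F t = a -> leL x t).
  destruct (lc_lub _ _ HL B) as [t0 [Hub Hleast]].
  { destruct (lc_min _ _ HL) as [m Hm]. exists m. intros t _. apply Hm. }
  { exists ta. intros x Hx. exact (Hx ta Hta). }
  assert (Hlow : forall t, F t = a -> leL t0 t)
    by (intros t Ht; apply Hleast; intros x Hx; exact (Hx t Ht)).
  exists t0. split; [|exact Hlow].
  assert (Hle : F t0 <= a) by (rewrite <- Hta; exact (Hmono _ _ (Hlow ta Hta))).
  destruct (Rle_lt_or_eq_dec _ _ Hle) as [Hlt|]; [exfalso|assumption].
  assert (Ht0a : lt t0 ta) by (destruct (Hlow ta Hta) as [| <-]; [assumption|lra]).
  destruct (continuous_right_approx F t0 ta (a - F t0) Hc Ht0a) as [x [Ht0x [_ Hx]]]; [lra|].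
  apply Rabs_def2 in Hx.
  apply (lt_not_ge t0 x Ht0x), Hub. intros t Ht.
  destruct (le_or_gt x t) as [|Htx]; [assumption|].
  pose proof (Hmono t x (or_introl Htx)). lra.
Qed.

Lemma order_continuous_lipschitz2 (F G H : L -> R) K : 0 < K ->
  (forall s t, Rabs (H s - H t) <= K * (Rabs (F s - F t) + Rabs (G s - G t))) ->
  order_continuous L lt F -> order_continuous L lt G -> order_continuous L lt H.
Proof.
  intros HK Hlip HF HG t eps Heps.
  assert (He : 0 < eps / (2 * K)) by (apply Rdiv_lt_0_compat; lra).
  destruct (HF t _ He) as [lo1 [hi1 [Hlo1 [Hhi1 Hnear1]]]].
  destruct (HG t _ He) as [lo2 [hi2 [Hlo2 [Hhi2 Hnear2]]]].
  destruct (below_meet lo1 lo2 t Hlo1 Hlo2) as [lo [Hlo Hlo_sub]].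
  destruct (above_meet hi1 hi2 t Hhi1 Hhi2) as [hi [Hhi Hhi_sub]].
  exists lo, hi. split; [exact Hlo|]. split; [exact Hhi|].
  intros s Hs_lo Hs_hi.
  destruct (Hlo_sub s Hs_lo), (Hhi_sub s Hs_hi).
  specialize (Hnear1 s ltac:(assumption) ltac:(assumption)).
  specialize (Hnear2 s ltac:(assumption) ltac:(assumption)).
  eapply Rle_lt_trans; [apply Hlip|].
  replace eps with (K * (eps / (2 * K) + eps / (2 * K))) by (field; lra).
  apply Rmult_lt_compat_l; lra.
Qed.

End LinearContinuum.

Section ML.
Context {L : Type} {lt : L -> L -> Prop} (HL : LinearContinuumWithEndpoints L lt).
Local Notation leL := (le L lt).

Lemma Rinf_image_at_min (u : L -> R) m : nondecreasing lt u -> (forall x, leL m x) ->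
  Rinf (fun r => exists t, r = u t) = u m.
Proof.
  intros Hmono Hm. unfold Rinf.
  rewrite (Rsup_eq_max _ (- u m)); [ring| exists m; ring |].
  intros x [t Ht]. pose proof (Hmono m t (Hm t)). lra.
Qed.

Lemma Rsup_image_at_max (u : L -> R) M : nondecreasing lt u -> (forall x, leL x M) ->
  Rsup (fun r => exists t, r = u t) = u M.
Proof.
  intros Hmono HM. apply Rsup_eq_max; [exists M; reflexivity|].
  intros x [t ->]. exact (Hmono t M (HM t)).
Qed.

Lemma inML_intro (u : L -> R) m M : (forall x, leL m x) -> (forall x, leL x M) ->
  nondecreasing lt u -> order_continuous L lt u -> u m = 0 -> u M = 1 -> inML L lt u.
Proof.
  intros Hm HM Hmono Hc Hu0 Hu1.
  split; [|split; [exact Hmono|split; [exact Hc|split]]].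
  - intros t. rewrite <- Hu0, <- Hu1. split; [apply Hmono, Hm | apply Hmono, HM].
  - rewrite (Rinf_image_at_min u m Hmono Hm). exact Hu0.
  - rewrite (Rsup_image_at_max u M Hmono HM). exact Hu1.
Qed.

Section Element.
Variable F : ML lt.
Local Notation u := (proj1_sig F).

Lemma ML_range t : 0 <= u t <= 1.
Proof. exact (proj1 (proj2_sig F) t). Qed.

Lemma ML_nondecreasing : nondecreasing lt u.
Proof. exact (proj1 (proj2 (proj2_sig F))). Qed.

Lemma ML_continuous : order_continuous L lt u.
Proof. exact (proj1 (proj2 (proj2 (proj2_sig F)))). Qed.

Lemma ML_at_min m : (forall x, leL m x) -> u m = 0.
Proof.
  intros Hm. rewrite <- (Rinf_image_at_min u m ML_nondecreasing Hm).
  exact (proj1 (proj2 (proj2 (proj2 (proj2_sig F))))).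
Qed.

Lemma ML_at_max M : (forall x, leL x M) -> u M = 1.
Proof.
  intros HM. rewrite <- (Rsup_image_at_max u M ML_nondecreasing HM).
  exact (proj2 (proj2 (proj2 (proj2 (proj2_sig F))))).
Qed.

End Element.

Section Pair.
Variables F G : ML lt.
Local Notation u := (proj1_sig F).
Local Notation v := (proj1_sig G).

Lemma sum_nondecreasing : nondecreasing lt (fun t => u t + v t).
Proof.
  intros s t Hst.
  pose proof (ML_nondecreasing F s t Hst); pose proof (ML_nondecreasing G s t Hst). lra.
Qed.

Lemma sum_continuous : order_continuous L lt (fun t => u t + v t).
Proof.
  apply (order_continuous_lipschitz2 HL u v _ 1); [lra| |apply ML_continuous|apply ML_continuous].
  intros s t. rewrite Rmult_1_l.
  replace (u s + v s - (u t + v t)) with ((u s - u t) + (v s - v t)) by ring.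
  apply Rabs_triang.
Qed.

Lemma exists_level beta : 0 <= beta <= 2 -> exists t, u t + v t = beta.
Proof.
  intros Hbeta.
  destruct (lc_min _ _ HL) as [m Hm], (lc_max _ _ HL) as [M HM].
  destruct (nondecreasing_ivt HL _ m M beta sum_nondecreasing sum_continuous (Hm M))
    as [t [Ht _]]; [|exists t; exact Ht].
  rewrite (ML_at_min F m Hm), (ML_at_min G m Hm), (ML_at_max F M HM), (ML_at_max G M HM).
  lra.
Qed.

Lemma fst_lipschitz_level s t : Rabs (u s - u t) <= Rabs ((u s + v s) - (u t + v t)).
Proof.
  destruct (le_or_gt HL s t) as [Hst|Hts].
  - pose proof (ML_nondecreasing F s t Hst); pose proof (ML_nondecreasing G s t Hst).
    rewrite !Rabs_left1; lra.
  - pose proof (ML_nondecreasing F t s (or_introl Hts)).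
    pose proof (ML_nondecreasing G t s (or_introl Hts)).
    rewrite !Rabs_pos_eq; lra.
Qed.

Lemma phiA_eq beta t : u t + v t = beta -> phiA L lt beta F G = u t.
Proof.
  intros Ht. apply Rsup_eq_max; [exists t; auto|].
  intros x [s [Hs ->]].
  pose proof (fst_lipschitz_level s t) as Hlip. rewrite Hs, Ht, Rminus_diag, Rabs_R0 in Hlip.
  pose proof (Rle_abs (u s - u t)). lra.
Qed.

Lemma phiA_lipschitz beta gamma : 0 <= beta <= 2 -> 0 <= gamma <= 2 ->
  Rabs (phiA L lt beta F G - phiA L lt gamma F G) <= Rabs (beta - gamma).
Proof.
  intros Hbeta Hgamma.
  destruct (exists_level beta Hbeta) as [s Hs], (exists_level gamma Hgamma) as [t Ht].
  rewrite (phiA_eq beta s Hs), (phiA_eq gamma t Ht), <- Hs, <- Ht.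
  apply fst_lipschitz_level.
Qed.

Lemma im_iff_phiA x y :
  im L lt F G (x, y) <-> 0 <= x + y <= 2 /\ phiA L lt (x + y) F G = x.
Proof.
  split.
  - intros [t [Hx Hy]]; cbn in Hx, Hy.
    pose proof (ML_range F t); pose proof (ML_range G t).
    split; [lra|]. rewrite (phiA_eq (x + y) t) by lra. exact Hx.
  - intros [Hb Hphi].
    destruct (exists_level _ Hb) as [t Ht]. rewrite (phiA_eq _ t Ht) in Hphi.
    exists t. cbn. split; lra.
Qed.

Lemma dist_ge t : Rabs (u t - v t) <= Defs.dist L lt F G.
Proof.
  apply Rsup_upper; [|exists t; reflexivity].
  exists 1. intros x [s ->].
  pose proof (ML_range F s); pose proof (ML_range G s).
  apply Rabs_le. lra.
Qed.

Lemma dist_le c : (forall t, Rabs (u t - v t) <= c) -> Defs.dist L lt F G <= c.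
Proof.
  intros Hc. apply Rsup_least.
  - destruct (lc_min _ _ HL) as [m _]. exists (Rabs (u m - v m)), m. reflexivity.
  - intros x [s ->]. apply Hc.
Qed.

End Pair.
End ML.

Section ShiftProfile.
Variable c : R.
Hypothesis Hc : 0 <= c < 1.
Local Notation k := (c / (1 - c)).

(* Profile of a witness h with d(h, g) <= c and h = 1 - f on the level set f + g = 1 + c;
   the second summand only restores h = 1 at the top. *)
Definition shift_profile (x y : R) : R := Rmax 0 (y - c) + k * Rmax 0 (x + y - (1 + c)).

Lemma shift_coef_ge0 : 0 <= k.
Proof. apply Rle_mult_inv_pos; lra. Qed.

Lemma shift_profile_monotone x y x' y' : x <= x' -> y <= y' ->
  shift_profile x y <= shift_profile x' y'.
Proof.
  intros Hx Hy. unfold shift_profile.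
  apply Rplus_le_compat; [|apply Rmult_le_compat_l; [exact shift_coef_ge0|]];
    apply Rle_max_compat_l; lra.
Qed.

Lemma shift_profile_lipschitz x y x' y' :
  Rabs (shift_profile x y - shift_profile x' y') <= (1 + k) * (Rabs (x - x') + Rabs (y - y')).
Proof.
  pose proof shift_coef_ge0 as Hk.
  pose proof (Rmax0_lipschitz (y - c) (y' - c)) as Hy.
  pose proof (Rmax0_lipschitz (x + y - (1 + c)) (x' + y' - (1 + c))) as Hxy.
  replace (y - c - (y' - c)) with (y - y') in Hy by ring.
  replace (x + y - (1 + c) - (x' + y' - (1 + c))) with ((x - x') + (y - y')) in Hxy by ring.
  pose proof (Rabs_triang (x - x') (y - y')). pose proof (Rabs_pos (x - x')).
  assert (k * Rabs (Rmax 0 (x + y - (1 + c)) - Rmax 0 (x' + y' - (1 + c)))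
          <= k * (Rabs (x - x') + Rabs (y - y'))) by (apply Rmult_le_compat_l; lra).
  unfold shift_profile.
  replace (Rmax 0 (y - c) + k * Rmax 0 (x + y - (1 + c)) -
           (Rmax 0 (y' - c) + k * Rmax 0 (x' + y' - (1 + c))))
    with ((Rmax 0 (y - c) - Rmax 0 (y' - c)) +
          k * (Rmax 0 (x + y - (1 + c)) - Rmax 0 (x' + y' - (1 + c)))) by ring.
  eapply Rle_trans; [apply Rabs_triang|]. rewrite Rabs_mult, (Rabs_pos_eq k Hk). lra.
Qed.

Lemma shift_profile_0 : shift_profile 0 0 = 0.
Proof. unfold shift_profile. rewrite !Rmax_left by lra. ring. Qed.

Lemma shift_profile_1 : shift_profile 1 1 = 1.
Proof. unfold shift_profile. rewrite !Rmax_right by lra. field. lra. Qed.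

Lemma shift_profile_close x y : 0 <= x <= 1 -> 0 <= y <= 1 -> Rabs (shift_profile x y - y) <= c.
Proof.
  intros Hx Hy. pose proof shift_coef_ge0 as Hk. unfold shift_profile. apply Rabs_le.
  destruct (Rle_or_lt c y) as [Hcy|Hyc].
  - rewrite (Rmax_right 0 (y - c)) by lra.
    assert (Hm : 0 <= Rmax 0 (x + y - (1 + c)) <= 1 - c)
      by (split; [apply Rmax_l | apply Rmax_lub; lra]).
    assert (k * Rmax 0 (x + y - (1 + c)) <= k * (1 - c)) by (apply Rmult_le_compat_l; lra).
    replace (k * (1 - c)) with c in * by (field; lra).
    pose proof (Rmult_le_pos _ _ Hk (proj1 Hm)). lra.
  - rewrite !Rmax_left by lra. lra.
Qed.

Lemma shift_profile_on_level x y : x + y = 1 + c -> x <= 1 -> shift_profile x y = 1 - x.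
Proof.
  intros Hxy Hx. unfold shift_profile.
  rewrite (Rmax_right 0 (y - c)), (Rmax_left 0 (x + y - (1 + c))) by lra. lra.
Qed.

End ShiftProfile.

Section LevelAboveOne.
Context {L : Type} {lt : L -> L -> Prop} (HL : LinearContinuumWithEndpoints L lt).
Variables (F G : ML lt) (c : R).
Hypothesis Hc : 0 <= c < 1.
Local Notation u := (proj1_sig F).
Local Notation v := (proj1_sig G).

Lemma shift_inML : inML L lt (fun t => shift_profile c (u t) (v t)).
Proof.
  destruct (lc_min _ _ HL) as [m Hm], (lc_max _ _ HL) as [M HM].
  apply (inML_intro _ m M Hm HM).
  - intros s t Hst. apply (shift_profile_monotone c Hc); apply ML_nondecreasing; exact Hst.
  - apply (order_continuous_lipschitz2 HL u v _ (1 + c / (1 - c))).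
    + pose proof (shift_coef_ge0 c Hc). lra.
    + intros s t. apply shift_profile_lipschitz, Hc.
    + apply ML_continuous.
    + apply ML_continuous.
  - rewrite (ML_at_min F m Hm), (ML_at_min G m Hm). apply shift_profile_0, Hc.
  - rewrite (ML_at_max F M HM), (ML_at_max G M HM). apply shift_profile_1, Hc.
Qed.

Definition shiftML : ML lt := exist _ _ shift_inML.

Lemma shiftML_dist : Defs.dist L lt shiftML G <= c.
Proof.
  apply (dist_le HL). intros t.
  apply shift_profile_close; [exact Hc | apply ML_range | apply ML_range].
Qed.

Lemma level_above_one_term_le (h : ML lt) :
  Rmax 0 (phiA L lt 1 F h - Rmax 0 (Defs.dist L lt h G - c)) <= phiA L lt (1 + c) F G.
Proof.
  destruct (exists_level HL F G (1 + c)) as [ts Hts]; [lra|].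
  destruct (exists_level HL F h 1) as [s Hs]; [lra|].
  rewrite (phiA_eq HL F G _ ts Hts), (phiA_eq HL F h 1 s Hs).
  pose proof (ML_range F ts).
  pose proof (Rmax_l 0 (Defs.dist L lt h G - c)); pose proof (Rmax_r 0 (Defs.dist L lt h G - c)).
  apply Rmax_lub; [lra|].
  destruct (le_or_gt HL s ts) as [Hle|Hgt].
  - pose proof (ML_nondecreasing F s ts Hle). lra.
  - (* beyond [ts], [v - h = u + v - 1 >= c], so [d(h, G) - c] pays for [u s - u ts] *)
    pose proof (ML_nondecreasing F ts s (or_introl Hgt)).
    pose proof (ML_nondecreasing G ts s (or_introl Hgt)).
    pose proof (dist_ge h G s) as Hd. rewrite Rabs_minus_sym in Hd.
    pose proof (Rle_abs (proj1_sig G s - proj1_sig h s)). lra.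
Qed.

Lemma level_above_one_term_shiftML :
  Rmax 0 (phiA L lt 1 F shiftML - Rmax 0 (Defs.dist L lt shiftML G - c)) = phiA L lt (1 + c) F G.
Proof.
  destruct (exists_level HL F G (1 + c)) as [ts Hts]; [lra|].
  pose proof (ML_range F ts) as Hu.
  rewrite (phiA_eq HL F G _ ts Hts), (phiA_eq HL F shiftML 1 ts).
  - pose proof shiftML_dist. rewrite (Rmax_left 0 (_ - c)), Rminus_0_r, Rmax_right by lra.
    reflexivity.
  - cbn. rewrite shift_profile_on_level by (auto; lra). ring.
Qed.

End LevelAboveOne.

Lemma Q_one_in_unit : (0 <= 1 /\ 1 <= 1)%Q.
Proof. split; discriminate. Qed.

(* [phi_q(x0, x0) = q / 2], and [1 - ((1 - x) ∸ x) = 2 x] for [x <= 1/2] *)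
Definition const_formula (q : Q) (Hq : (0 <= q /\ q <= 1)%Q) : formula :=
  FNeg (FMinus (FNeg (FPhi q Hq 0 0)) (FPhi q Hq 0 0)).

Definition level_above_one_formula (K : formula) : formula :=
  FSup 2 (FMinus (FPhi 1 Q_one_in_unit 0 2) (FMinus (FDist 2 1) K)).

Definition level_definable {L : Type} (lt : L -> L -> Prop) (beta : R) : Prop :=
  exists psi, fv_below 2 psi /\
    forall e : nat -> ML lt, eval L lt e psi = phiA L lt beta (e 0%nat) (e 1%nat).

Section Definability.
Context {L : Type} {lt : L -> L -> Prop} (HL : LinearContinuumWithEndpoints L lt).

Lemma eval_const_formula q (Hq : (0 <= q /\ q <= 1)%Q) (e : nat -> ML lt) :
  eval L lt e (const_formula q Hq) = Q2R q.
Proof.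
  pose proof (proj1 (Q2R_in_unit q) Hq) as Hq'.
  destruct (exists_level HL (e 0%nat) (e 0%nat) (Q2R q)) as [t Ht]; [lra|].
  cbn [eval const_formula]. rewrite (phiA_eq HL _ _ _ t Ht), Rmax_right by lra. lra.
Qed.

Lemma eval_level_above_one_formula K c : 0 <= c < 1 -> (forall e, eval L lt e K = c) ->
  forall e, eval L lt e (level_above_one_formula K) = phiA L lt (1 + c) (e 0%nat) (e 1%nat).
Proof.
  intros Hc HK e. cbn [eval level_above_one_formula upd Nat.eqb].
  rewrite RMicromega.Q2R_1.
  apply Rsup_eq_max.
  - exists (shiftML HL (e 0%nat) (e 1%nat) c Hc).
    rewrite HK. symmetry. apply level_above_one_term_shiftML.
  - intros r [h ->]. rewrite HK. apply level_above_one_term_le; assumption.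
Qed.

Lemma level_definable_unit q (Hq : (0 <= q /\ q <= 1)%Q) : level_definable lt (Q2R q).
Proof.
  exists (FPhi q Hq 0 1). split; [|reflexivity].
  intros k Hk. cbn in Hk. lia.
Qed.

Lemma level_definable_above_one q (Hq : (0 <= q /\ q <= 1)%Q) :
  Q2R q < 1 -> level_definable lt (1 + Q2R q).
Proof.
  intros Hq1. pose proof (proj1 (Q2R_in_unit q) Hq).
  exists (level_above_one_formula (const_formula q Hq)). split.
  - intros k Hk. cbn in Hk. lia.
  - apply eval_level_above_one_formula; [lra|]. apply eval_const_formula.
Qed.

Lemma level_definable_dense beta eps : 0 <= beta <= 2 -> 0 < eps ->
  exists gamma, 0 <= gamma <= 2 /\ Rabs (gamma - beta) < eps /\ level_definable lt gamma.
Proof.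
  intros Hbeta Heps. destruct (Rle_or_lt beta 1) as [Hle|Hgt].
  - destruct (Q_unit_approx beta eps) as [q [Hq Happrox]]; [lra|exact Heps|].
    pose proof (proj2 (Q2R_in_unit q) ltac:(lra)) as HqQ.
    exists (Q2R q). split; [lra|]. split; [exact Happrox|]. exact (level_definable_unit q HqQ).
  - destruct (Q_unit_approx (beta - 1) eps) as [q [Hq Happrox]]; [lra|exact Heps|].
    pose proof (proj2 (Q2R_in_unit q) ltac:(lra)) as HqQ.
    exists (1 + Q2R q). split; [lra|]. split.
    + replace (1 + Q2R q - beta) with (Q2R q - (beta - 1)) by ring. exact Happrox.
    + exact (level_definable_above_one q HqQ (proj2 Hq)).
Qed.

End Definability.

Definition pair_index {I : Type} (p q : I) (k : nat) : I :=
  match k with 0%nat => p | _ => q end.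

Lemma pair_index_increasing {I : Type} (ltI : I -> I -> Prop) p q :
  ltI p q -> increasing_on ltI 2%nat (pair_index p q).
Proof. intros Hpq [|a] [|b] Hab Hb; cbn; [lia|exact Hpq|lia|lia]. Qed.

Section Indiscernible.
Context {L : Type} {lt : L -> L -> Prop} (HL : LinearContinuumWithEndpoints L lt).
Context {I : Type} (ltI : I -> I -> Prop) (f : I -> ML lt).
Hypothesis Hind : indiscernible L lt ltI f.

Lemma phiA_indiscernible_definable beta p q p' q' : ltI p q -> ltI p' q' ->
  level_definable lt beta -> phiA L lt beta (f p) (f q) = phiA L lt beta (f p') (f q').
Proof.
  intros Hpq Hpq' [psi [Hfv Hpsi]].
  pose proof (Hind psi 2%nat Hfv _ _ (pair_index_increasing ltI p q Hpq)
                (pair_index_increasing ltI p' q' Hpq')) as E.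
  rewrite !Hpsi in E. exact E.
Qed.

Lemma phiA_indiscernible beta p q p' q' : ltI p q -> ltI p' q' -> 0 <= beta <= 2 ->
  phiA L lt beta (f p) (f q) = phiA L lt beta (f p') (f q').
Proof.
  intros Hpq Hpq' Hbeta.
  apply (lipschitz_eq_of_dense_eq (fun b => phiA L lt b (f p) (f q))
           (fun b => phiA L lt b (f p') (f q')) 0 2); [| |intros eps Heps|exact Hbeta].
  - apply (phiA_lipschitz HL).
  - apply (phiA_lipschitz HL).
  - destruct (level_definable_dense HL beta eps Hbeta Heps) as [gamma [Hgamma [Hclose Hdef]]].
    exists gamma. repeat split; try apply Hgamma; [exact Hclose|].
    exact (phiA_indiscernible_definable gamma p q p' q' Hpq Hpq' Hdef).
Qed.

Lemma im_indiscernible p q p' q' x y : ltI p q -> ltI p' q' ->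
  im L lt (f p) (f q) (x, y) -> im L lt (f p') (f q') (x, y).
Proof.
  intros Hpq Hpq'. rewrite !(im_iff_phiA HL). intros [Hb Hphi].
  split; [exact Hb|]. rewrite <- (phiA_indiscernible _ p q p' q' Hpq Hpq' Hb). exact Hphi.
Qed.

Lemma im_indiscernible_compose i j p q r : ltI i j -> ltI p q -> ltI q r -> ltI p r ->
  forall x z, im L lt (f i) (f j) (x, z) ->
  exists y, im L lt (f i) (f j) (x, y) /\ im L lt (f i) (f j) (y, z).
Proof.
  intros Hij Hpq Hqr Hpr x z Hxz.
  destruct (im_indiscernible i j p r x z Hij Hpr Hxz) as [t [Hx Hz]].
  exists (proj1_sig (f q) t). split.
  - apply (im_indiscernible p q i j); [exact Hpq | exact Hij |].
    exists t. split; [exact Hx | reflexivity].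
  - apply (im_indiscernible q r i j); [exact Hqr | exact Hij |].
    exists t. split; [reflexivity | exact Hz].
Qed.

End Indiscernible.

Lemma im_swap {L : Type} {lt : L -> L -> Prop} (F G : ML lt) x y :
  im L lt F G (x, y) -> im L lt G F (y, x).
Proof. intros [t [Hx Hy]]. exists t. split; assumption. Qed.

Section Diagonal.
Context {L : Type} {lt : L -> L -> Prop} (HL : LinearContinuumWithEndpoints L lt).
Variables F G : ML lt.
Local Notation u := (proj1_sig F).
Local Notation v := (proj1_sig G).
Hypothesis Hcomp : forall x z, im L lt F G (x, z) ->
  exists y, im L lt F G (x, y) /\ im L lt F G (y, z).

Lemma im_diag_of_lt a b : a < b -> im L lt F G (a, b) ->
  im L lt F G (a, a) \/ im L lt F G (b, b).
Proof.
  intros Hab [tb [Hutb Hvtb]]; cbn in Hutb, Hvtb.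
  destruct (nondecreasing_fiber_min HL u a (ML_nondecreasing F) (ML_continuous F)
              (ex_intro _ tb Hutb)) as [t0 [Hut0 Hmin]].
  assert (Hvt0 : v t0 <= b) by (rewrite <- Hvtb; apply ML_nondecreasing, Hmin, Hutb).
  destruct (Rle_or_lt (v t0) a) as [Hvt0a|Havt0].
  - left.
    destruct (nondecreasing_ivt HL v t0 tb a (ML_nondecreasing G) (ML_continuous G)
                (Hmin tb Hutb)) as [t [Hvt [Ht0t Httb]]]; [lra|].
    pose proof (ML_nondecreasing F _ _ Ht0t); pose proof (ML_nondecreasing F _ _ Httb).
    exists t. cbn. split; lra.
  - right.
    destruct (Hcomp a (v t0)) as [y [[t1 [Hut1 Hvt1]] [t2 [Hut2 Hvt2]]]];
      [exists t0; split; reflexivity + assumption|].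
    cbn in Hut1, Hvt1, Hut2, Hvt2.
    assert (Hy : v t0 <= y) by (rewrite <- Hvt1; apply ML_nondecreasing, Hmin, Hut1).
    assert (Ht0t2 : le L lt t0 t2).
    { destruct (le_or_gt HL t0 t2) as [|Ht2t0]; [assumption|].
      pose proof (ML_nondecreasing F _ _ (or_introl Ht2t0)). lra. }
    destruct (nondecreasing_ivt HL u t0 t2 (v t0) (ML_nondecreasing F) (ML_continuous F) Ht0t2)
      as [t3 [Hut3 [Ht0t3 Ht3t2]]]; [lra|].
    assert (Hvt3 : v t3 = v t0).
    { pose proof (ML_nondecreasing G _ _ Ht0t3); pose proof (ML_nondecreasing G _ _ Ht3t2). lra. }
    (* [u t3 = v t0 > a = u tb] puts [t3] beyond [tb], so [v t0 = v t3 >= v tb = b] *)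
    assert (Htbt3 : lt tb t3).
    { destruct (le_or_gt HL t3 tb) as [Ht3tb|]; [|assumption].
      pose proof (ML_nondecreasing F _ _ Ht3tb). lra. }
    pose proof (ML_nondecreasing G _ _ (or_introl Htbt3)).
    exists t3. cbn. split; lra.
Qed.

End Diagonal.

Lemma im_diag {L : Type} {lt : L -> L -> Prop} (HL : LinearContinuumWithEndpoints L lt)
  (F G : ML lt) :
  (forall x z, im L lt F G (x, z) -> exists y, im L lt F G (x, y) /\ im L lt F G (y, z)) ->
  forall a b, im L lt F G (a, b) -> im L lt F G (a, a) \/ im L lt F G (b, b).
Proof.
  intros Hcomp a b Hab.
  destruct (Rtotal_order a b) as [Hlt|[<-|Hgt]].
  - exact (im_diag_of_lt HL F G Hcomp a b Hlt Hab).
  - left. exact Hab.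
  - assert (Hcomp' : forall x z, im L lt G F (x, z) ->
              exists y, im L lt G F (x, y) /\ im L lt G F (y, z)).
    { intros x z Hxz. destruct (Hcomp z x (im_swap G F x z Hxz)) as [y [Hzy Hyx]].
      exists y. split; apply im_swap; assumption. }
    destruct (im_diag_of_lt HL G F Hcomp' b a Hgt (im_swap F G a b Hab)) as [H|H];
      [right|left]; apply im_swap in H; exact H.
Qed.

Theorem mainTheorem19
  (L : Type) (lt : L -> L -> Prop) (HL : LinearContinuumWithEndpoints L lt)
  (I : Type) (ltI : I -> I -> Prop) (HI : StrictLinearOrder I ltI)
  (H3 : exists x y z : I, ltI x y /\ ltI y z)
  (f : I -> ML lt) (Hind : indiscernible L lt ltI f)
  (i j : I) (Hij : ltI i j) (a b : R) (Hab : im L lt (f i) (f j) (a, b)) :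
  im L lt (f i) (f j) (a, a) \/ im L lt (f i) (f j) (b, b).
Proof.
  destruct H3 as [p [q [r [Hpq Hqr]]]].
  apply (im_diag HL (f i) (f j)); [|exact Hab].
  apply (im_indiscernible_compose HL ltI f Hind i j p q r Hij Hpq Hqr).
  exact (slo_trans _ _ HI p q r Hpq Hqr).
Qed.
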